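(* Let $n$ be even, let $r\le s\le 2r-1$, and let $m=s-r+1$. Then $$\nu(n,P^{(r)}_s)\ge 2h(n,r,m)+h(n,r-1,m).$$
   Context: $K^{(r)}_n$ denotes the ordered complete $r$-uniform hypergraph on vertex set $[n]=\{1,\dots,n\}$ (natural order), whose edges are all $r$-subsets of $[n]$. A copy of an ordered hypergraph $H$ in $K^{(r)}_n$ is the image of $H$ under an order-preserving injection $V(H)\to[n]$. The natural (tight) path $P^{(r)}_s$ has vertices $v_1<\dots<v_s$ and its edges are all sets of $r$ consecutive vertices $\{v_j,\dots,v_{j+r-1}\}$, $1\le j\le s-r+1$. For an ordered $r$-uniform $H$, $\nu(n,H)$ is the maximum number of copies of $H$ in $K^{(r)}_n$ that are pairwise edge-disjoint. An interval partition $(X,Y,Z)$ of $[n]$ consists of consecutive (possibly empty) intervals $X<Y<Z$ with union $[n]$. A set $S\subseteq[n]$ is $m$-left-biased if there is an interval partition $(X,Y,Z)$ of $[n]$ with $|X|=|Z|$, $|X\cap S|=m$ and $|Z\cap S|=0$. $h(n,t,m)$ denotes the number of $t$-subsets of $[n]$ that are $m$-left-biased. *)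

(* Vertex set [n] = {1..n} is modelled by 'I_n = {0..n-1}
   with its natural order. *)
From mathcomp Require Import all_boot.
Set Implicit Arguments. Unset Strict Implicit. Unset Printing Implicit Defensive.

(* An ordered hypergraph on vertex set 'I_k is given by its edge set. *)

Definition order_preserving (k n : nat) (f : {ffun 'I_k -> 'I_n}) : bool :=
  [forall i : 'I_k, forall j : 'I_k, (i < j) ==> (f i < f j)].

Definition copy_edges (k n : nat) (E : {set {set 'I_k}}) (f : {ffun 'I_k -> 'I_n})
  : {set {set 'I_n}} := [set (f @: (e : {set 'I_k})) | e in E].

Definition is_copy (k n : nat) (E : {set {set 'I_k}}) (C : {set {set 'I_n}}) : bool :=
  [exists f : {ffun 'I_k -> 'I_n}, order_preserving f && (C == copy_edges E f)].

Definition edge_disjoint_copies (k n : nat) (E : {set {set 'I_k}})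
  (F : {set {set {set 'I_n}}}) : bool :=
  [forall C in F, is_copy E C] &&
  [forall C in F, forall D in F, (C != D) ==> (C :&: D == set0)].

Definition nu (k n : nat) (E : {set {set 'I_k}}) : nat :=
  \max_(F : {set {set {set 'I_n}}} | edge_disjoint_copies E F) #|F|.

Definition tight_path (r s : nat) : {set {set 'I_s}} :=
  [set [set i : 'I_s | (j <= i) && (i < j + r)] | j : 'I_s & j + r <= s].

(* S is m-left-biased: there is an interval partition X < Y < Z of [n],
   X = [0,a), Y = [a,b), Z = [b,n), with |X| = |Z|, |X ∩ S| = m, Z ∩ S = ∅ *)
Definition left_biased (n m : nat) (S : {set 'I_n}) : bool :=
  [exists a : 'I_n.+1, exists b : 'I_n.+1,
    [&& a <= b, (a : nat) == n - b,
        #|[set x in S | x < a]| == m &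
        [forall x in S, x < b]]].

Definition h (n t m : nat) : nat :=
  #|[set S : {set 'I_n} | (#|S| == t) && left_biased m S]|.

From mathcomp Require Import all_boot zify.
Set Implicit Arguments. Unset Strict Implicit. Unset Printing Implicit Defensive.

(* Take the vertices to be 0, ..., n and put m = s - r + 1, so that a tight path on
   s = r + m - 1 vertices has m edges, its windows of r consecutive vertices.  A sequence
   t_0 < ... < t_(r-1) with t_(m-1) + t_(r-1) <= n spans the increasing path
   t_0, ..., t_(r-1), t_0 + c, ..., t_(m-2) + c in [0, n], where c = n + 1 - t_(m-1).
   An m-left-biased r-set yields such a sequence with t_(m-1) + t_(r-1) < n, and the
   reflection x |-> n - x of its path is then a second copy; an m-left-biased (r-1)-set,
   completed by the vertex n - t_(m-1), yields one with t_(m-1) + t_(r-1) = n.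
   In every edge of an unreflected path, t_(m-1) is the unique element x whose rank in the
   edge plus the number of elements y of the edge with x + y > n equals m - 1.  This
   fingerprint locates the window inside the path, and the window then determines the
   whole sequence; no edge of a reflected path has a fingerprint. *)

Lemma card_le_nu k N (E : {set {set 'I_k}}) (I : finType) (J : {set I})
    (g : I -> {set {set 'I_N}}) :
  {in J, forall i, is_copy E (g i)} ->
  {in J, forall i, g i != set0} ->
  (forall i1 i2 e, i1 \in J -> i2 \in J -> e \in g i1 -> e \in g i2 -> i1 = i2) ->
  #|J| <= nu N E.
Proof.
move=> g_copy g_neq0 g_disj.
have g_inj : {in J &, injective g}.
  move=> i1 i2 i1J i2J g12; have /set0Pn[e e_g1] := g_neq0 i1 i1J.
  by apply: (g_disj i1 i2 e) => //; rewrite -g12.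
have F_ok : edge_disjoint_copies E (g @: J).
  apply/andP; split; apply/forall_inP => _ /imsetP[i1 i1J ->]; first exact: g_copy.
  apply/forall_inP => _ /imsetP[i2 i2J ->]; apply/implyP => g12.
  apply/eqP/setP => e; rewrite !inE; apply/negbTE/andP => -[e1 e2].
  by move: g12; rewrite (g_disj i1 i2 e) ?eqxx.
by rewrite -(card_in_imset g_inj); apply: leq_bigmax_cond.
Qed.

Lemma sub_in_count (T : eqType) (a1 a2 : pred T) (s : seq T) :
  {in s, subpred a1 a2} -> count a1 s <= count a2 s.
Proof.
move=> sub12; rewrite -(eq_in_count (a1 := predI a1 a2)).
  by apply: sub_count => x /andP[].
by move=> x xs /=; case: (boolP (a1 x)) => //= /(sub12 x xs) ->.
Qed.

Lemma count_iota_geq a r : count (fun i => a <= i) (iota 0 r) = r - a.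
Proof.
elim: r => [|r IH] //.
by rewrite -addn1 iotaD count_cat IH /=; lia.
Qed.

Lemma count_iota_suffix_ge (P : pred nat) a r :
  (forall i, a <= i < r -> P i) -> r - a <= count P (iota 0 r).
Proof.
move=> P_suffix; rewrite -count_iota_geq; apply: sub_in_count => i.
by rewrite mem_iota => /andP[_ ir] ai; apply: P_suffix; rewrite ai.
Qed.

Lemma count_iota_suffix_le (P : pred nat) a r :
  (forall i, i < r -> P i -> a <= i) -> count P (iota 0 r) <= r - a.
Proof.
move=> P_suffix; rewrite -count_iota_geq; apply: sub_in_count => i.
by rewrite mem_iota => /andP[_ ir]; apply: P_suffix.
Qed.

Lemma count_iota_prefix_le (P : pred nat) a r :
  (forall i, i < r -> P i -> i < a) -> count P (iota 0 r) <= a.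
Proof.
move=> P_prefix; apply: (@leq_trans (count (predC (fun i => a <= i)) (iota 0 r))).
  apply: sub_in_count => i; rewrite mem_iota => /andP[_ ir] /(P_prefix _ ir).
  by rewrite /= -ltnNge.
by have := count_predC (fun i => a <= i) (iota 0 r); rewrite count_iota_geq size_iota; lia.
Qed.

Section Fingerprint.

Variables n m : nat.

Definition fingerprint (w : seq nat) (q : nat) : bool :=
  (q < size w) && ((q + count (fun y => n < y + nth 0 w q) w).+1 == m).

Lemma fingerprint_uniq w q1 q2 :
  sorted ltn w -> fingerprint w q1 -> fingerprint w q2 -> q1 = q2.
Proof.
move=> w_sorted.
wlog lt_q : q1 q2 / q1 < q2.
  move=> IH fp1 fp2; case: (ltngtP q1 q2) => [lt|lt|//]; first exact: IH.
  exact/esym/IH.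
case/andP=> _ /eqP fp1 /andP[q2w /eqP fp2].
have lt_w : nth 0 w q1 < nth 0 w q2.
  by apply: (sorted_ltn_nth ltn_trans) => //; rewrite inE (ltn_trans lt_q).
have : count (fun y => n < y + nth 0 w q1) w <= count (fun y => n < y + nth 0 w q2) w.
  by apply: sub_count => y /= /leq_trans; apply; rewrite leq_add2l ltnW.
lia.
Qed.

Variable r : nat.

Lemma fingerprint_mkseq (v : nat -> nat) c k :
  c < k <= r -> (c + (r - k)).+1 = m ->
  (forall i, i < k -> v i + v c <= n) ->
  (forall i, k <= i < r -> n < v i + v c) ->
  fingerprint (mkseq v r) c.
Proof.
move=> /andP[ck kr] cm lo hi; rewrite /fingerprint size_mkseq nth_mkseq; last lia.
have cr : c < r by lia.
rewrite cr count_map -cm; apply/eqP; congr (_ + _).+1; apply/eqP; rewrite eqn_leq.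
rewrite count_iota_suffix_le ?count_iota_suffix_ge //= => i ir.
by case: (ltnP i k) => // /lo; lia.
Qed.

Lemma no_fingerprint_mirror (v : nat -> nat) c k q :
  {in gtn r &, {homo v : i j / i < j}} -> (forall i, i < r -> v i <= n) ->
  c < k <= r -> (c + (r - k)).+1 = m ->
  (forall i, i < k -> v i + v c < n) ->
  (forall i, k <= i < r -> n < v i + v c) ->
  ~~ fingerprint (mkseq (fun i => n - v (r.-1 - i)) r) q.
Proof.
move=> v_incr v_le /andP[ck kr] cm lo hi; apply/negP.
have v_mono i j : i <= j < r -> v i <= v j.
  case/andP; rewrite leq_eqVlt => /orP[/eqP-> //|ij jr].
  by apply/ltnW/v_incr; rewrite ?inE //= (ltn_trans ij).
rewrite /fingerprint size_mkseq => /andP[qr]; rewrite nth_mkseq // count_map.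
set q' := r.-1 - q; have q'r : q' < r by lia.
set P := preim _ _; have P_low i : i < r -> P i = (v (r.-1 - i) + v q' < n).
  by move=> ir; rewrite /P /=; have := v_le _ q'r; have := v_le (r.-1 - i); lia.
case: (ltnP q' k) => [q'k | kq'].
  have : c.+1 <= count P (iota 0 r).
    rewrite (_ : c.+1 = r - (r.-1 - c)); last lia.
    apply: count_iota_suffix_ge => i ir; rewrite P_low; last lia.
    by have := lo _ q'k; have := v_mono (r.-1 - i) c; lia.
  lia.
have q'_high : n < v q' + v c by apply: hi; rewrite kq'.
have : count P (iota 0 r) <= c.
  rewrite (_ : c = r - (r - c)); last lia.
  apply: count_iota_suffix_le => i ir; rewrite P_low //.
  by have := v_mono c (r.-1 - i); lia.
lia.
Qed.

End Fingerprint.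

Definition window (r : nat) (f : nat -> nat) (j : nat) : seq nat :=
  mkseq (fun i => f (j + i)) r.

Definition increasing_into (s n : nat) (f : nat -> nat) : Prop :=
  {in gtn s &, {homo f : i j / i < j}} /\ forall i, i < s -> f i <= n.

Section PathCopy.

Variables n r s : nat.

Definition path_copy (f : nat -> nat) : {set {set 'I_n.+1}} :=
  copy_edges (tight_path r s) [ffun i : 'I_s => inord (f i)].

Lemma path_copy_is_copy f :
  increasing_into s n f -> is_copy (tight_path r s) (path_copy f).
Proof.
case=> f_incr f_le; apply/existsP; exists [ffun i : 'I_s => inord (f i)].
rewrite eqxx andbT; apply/forallP => i; apply/forallP => j; apply/implyP => ij.
by rewrite !ffunE !inordK ?ltnS ?f_le //; apply: f_incr; rewrite ?inE /=.
Qed.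

Lemma path_copy_neq0 f : 0 < r <= s -> path_copy f != set0.
Proof.
case/andP=> r_gt0 rs; have s_gt0 : 0 < s by lia.
apply/set0Pn; exists ([ffun i : 'I_s => inord (f i)] @: [set i : 'I_s | 0 <= i < r]).
apply/imsetP; exists [set i : 'I_s | 0 <= i < r] => //.
by apply/imsetP; exists (Ordinal s_gt0); rewrite ?inE.
Qed.

Lemma window_sorted f j :
  increasing_into s n f -> j + r <= s -> sorted ltn (window r f j).
Proof.
case=> f_incr _ js; apply/(sortedP 0) => i; rewrite size_mkseq => ir.
by rewrite !nth_mkseq ?(ltnW ir) //; apply: f_incr; rewrite ?inE /=; lia.
Qed.

Lemma mem_window_le f j y :
  increasing_into s n f -> j + r <= s -> y \in window r f j -> y <= n.
Proof.
by case=> _ f_le js /mapP[i]; rewrite mem_iota => /andP[_ ir] ->; apply: f_le; lia.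
Qed.

Lemma mem_path_copy f e :
  increasing_into s n f -> e \in path_copy f ->
  exists2 j, j + r <= s & forall x : 'I_n.+1, (x \in e) = (val x \in window r f j).
Proof.
case=> _ f_le /imsetP[_ /imsetP[j j_ok ->] ->]; rewrite inE in j_ok.
exists j => // x; apply/imsetP/mapP.
  case=> i; rewrite inE => /andP[ji ir] ->; exists (i - j); first by rewrite mem_iota; lia.
  by rewrite ffunE /= inordK ?subnKC // ltnS f_le.
case=> i; rewrite mem_iota => /andP[_ ir] xE; have jis : j + i < s by lia.
exists (Ordinal jis); first by rewrite inE /=; lia.
by rewrite ffunE; apply/val_inj => /=; rewrite inordK -xE //; apply: ltn_ord.
Qed.

Lemma path_copy_meet f1 f2 e :
  increasing_into s n f1 -> increasing_into s n f2 ->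
  e \in path_copy f1 -> e \in path_copy f2 ->
  exists j1 j2, [/\ j1 + r <= s, j2 + r <= s & window r f1 j1 = window r f2 j2].
Proof.
move=> f1_ok f2_ok /(mem_path_copy f1_ok)[j1 j1s e_f1] /(mem_path_copy f2_ok)[j2 j2s e_f2].
exists j1, j2; split => //.
apply: (irr_sorted_eq ltn_trans ltnn) => [||y]; try exact: window_sorted.
case: (ltnP n y) => [ny | yn].
  by apply/idP/idP => [/(mem_window_le f1_ok j1s) | /(mem_window_le f2_ok j2s)]; lia.
have yn1 : y < n.+1 by [].
by rewrite -[y]/(val (Ordinal yn1)) -e_f1 e_f2.
Qed.

End PathCopy.

Section Construction.

Variables n r m : nat.
Hypotheses (m_gt0 : 0 < m) (m_le_r : m <= r).

Local Notation s := (r + m - 1).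

Definition pivot (t : seq nat) : nat := nth 0 t m.-1.

Definition pivot_sum (t : seq nat) : nat := pivot t + nth 0 t r.-1.

Definition admissible (t : seq nat) : bool :=
  [&& sorted ltn t, size t == r & pivot_sum t <= n].

Definition path_vertex (t : seq nat) (i : nat) : nat :=
  if i < r then nth 0 t i else nth 0 t (i - r) + n.+1 - pivot t.

Definition mirror_vertex (t : seq nat) (i : nat) : nat :=
  n - path_vertex t (s.-1 - i).

Definition vertex_map (b : bool) : seq nat -> nat -> nat :=
  if b then mirror_vertex else path_vertex.

Lemma path_vertex_low t i : i < r -> path_vertex t i = nth 0 t i.
Proof. by rewrite /path_vertex => ->. Qed.

Lemma path_vertex_high t k : path_vertex t (r + k) = nth 0 t k + n.+1 - pivot t.
Proof. by rewrite /path_vertex ltnNge leq_addr addKn. Qed.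

Lemma pivot_in_window t j : j < m -> path_vertex t (j + (m.-1 - j)) = pivot t.
Proof. by move=> jm; rewrite path_vertex_low (_ : j + (m.-1 - j) = m.-1) //; lia. Qed.

Lemma mirror_window t j : j < m ->
  window r (mirror_vertex t) j = mkseq (fun i => n - path_vertex t (m.-1 - j + (r.-1 - i))) r.
Proof.
move=> jm; apply/eq_in_map => i; rewrite mem_iota => /andP[_ ir].
by rewrite /mirror_vertex; congr (n - path_vertex t _); lia.
Qed.

Section Admissible.

Variable t : seq nat.
Hypothesis t_adm : admissible t.

Let t_sum : pivot t + nth 0 t r.-1 <= n.
Proof. by case/and3P: t_adm. Qed.

Let nth_lt i j : i < j < r -> nth 0 t i < nth 0 t j.
Proof.
case/and3P: t_adm => t_sorted /eqP t_size _ /andP[ij jr].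
by apply: (sorted_ltn_nth ltn_trans) => //; rewrite inE t_size // (ltn_trans ij).
Qed.

Let nth_le i j : i <= j < r -> nth 0 t i <= nth 0 t j.
Proof.
case/andP; rewrite leq_eqVlt => /orP[/eqP-> //|ij jr].
by apply/ltnW/nth_lt; rewrite ij.
Qed.

Lemma path_vertex_increasing : increasing_into s n (path_vertex t).
Proof.
have pivot_le : pivot t <= nth 0 t r.-1 by apply: nth_le; lia.
split => [|i i_s].
  apply: homo_ltn_in => [y x z|i j|i]; first exact: ltn_trans.
    by rewrite !inE /= => _ j_s k /andP[_ kj]; apply: ltn_trans j_s.
  rewrite !inE /= => i_s i1_s; rewrite /path_vertex; case: (ltnP i.+1 r) => [i1r | ri1].
    by rewrite (ltnW i1r) nth_lt // ltnSn i1r.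
  case: (ltnP i r) => [ir | ri].
    have -> : i.+1 - r = 0 by lia.
    have -> : i = r.-1 by lia.
    lia.
  have : nth 0 t (i - r) < nth 0 t (i.+1 - r) by apply: nth_lt; lia.
  lia.
rewrite /path_vertex; case: (ltnP i r) => [ir | ri].
  by have := nth_le (_ : i <= r.-1 < r); lia.
have : nth 0 t (i - r) < pivot t by apply: nth_lt; lia.
lia.
Qed.

Lemma mirror_vertex_increasing : increasing_into s n (mirror_vertex t).
Proof.
have [pv_incr pv_le] := path_vertex_increasing.
split => [i j i_s j_s ij|i _]; last exact: leq_subr.
rewrite /mirror_vertex; rewrite !inE /= in i_s j_s.
have : path_vertex t (s.-1 - j) < path_vertex t (s.-1 - i) by apply: pv_incr; rewrite ?inE /=; lia.
have := pv_le (s.-1 - i); lia.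
Qed.

Lemma vertex_map_increasing b : increasing_into s n (vertex_map b t).
Proof. by case: b; [exact: mirror_vertex_increasing | exact: path_vertex_increasing]. Qed.

Lemma path_vertex_low_le i : i < r -> path_vertex t i <= nth 0 t r.-1.
Proof. by move=> ir; rewrite path_vertex_low //; apply: nth_le; lia. Qed.

Lemma path_vertex_high_gt i : r <= i -> n < path_vertex t i + pivot t.
Proof. by move=> ri; rewrite -(subnKC ri) path_vertex_high; lia. Qed.

Lemma fingerprint_path_window j :
  j < m -> fingerprint n m (window r (path_vertex t) j) (m.-1 - j).
Proof.
move=> jm; apply: (fingerprint_mkseq (k := r - j)); try lia.
  by move=> i ijr; rewrite pivot_in_window //; have := path_vertex_low_le (_ : j + i < r); lia.
by move=> i /andP[rji ir]; rewrite pivot_in_window // path_vertex_high_gt //; lia.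
Qed.

Lemma no_fingerprint_mirror_window j q :
  j < m -> pivot_sum t < n ->
  ~~ fingerprint n m (window r (mirror_vertex t) j) q.
Proof.
move=> jm; rewrite /pivot_sum => t_strict; rewrite mirror_window //; set j' := m.-1 - j.
have [pv_incr pv_le] := path_vertex_increasing.
have v_c : path_vertex t (j' + j) = pivot t.
  by rewrite path_vertex_low /j' (_ : m.-1 - j + j = m.-1) //; lia.
apply: (no_fingerprint_mirror (v := fun i => path_vertex t (j' + i)) (c := j) (k := r - j')) => /=.
- by move=> a b; rewrite !inE /= => ar br ab; apply: pv_incr; rewrite ?inE /=; lia.
- by move=> i ir; apply: pv_le; lia.
- lia.
- lia.
- by move=> i ir; rewrite v_c; have := path_vertex_low_le (_ : j' + i < r); lia.
- by move=> i /andP[rj ir]; rewrite v_c path_vertex_high_gt //; lia.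
Qed.

End Admissible.

Lemma path_window_inj t1 t2 j1 j2 :
  admissible t1 -> admissible t2 -> j1 < m -> j2 < m ->
  window r (path_vertex t1) j1 = window r (path_vertex t2) j2 -> t1 = t2.
Proof.
move=> t1_adm t2_adm j1m j2m w12.
have w1_sorted : sorted ltn (window r (path_vertex t1) j1).
  by apply: window_sorted (path_vertex_increasing t1_adm) _; lia.
have fp2 := fingerprint_path_window t2_adm j2m; rewrite -w12 in fp2.
have j21 : j2 = j1.
  by have := fingerprint_uniq w1_sorted (fingerprint_path_window t1_adm j1m) fp2; lia.
subst j2; have pv12 i : i < r -> path_vertex t1 (j1 + i) = path_vertex t2 (j1 + i).
  by move=> ir; have := congr1 (nth 0 ^~ i) w12; rewrite !nth_mkseq.
have p12 : pivot t1 = pivot t2.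
  by rewrite -(pivot_in_window t1 j1m) -(pivot_in_window t2 j1m) pv12 //; lia.
case/and3P: t1_adm t2_adm => _ /eqP t1_size _ /and3P[_ /eqP t2_size t2_sum].
apply: (@eq_from_nth _ 0) => [|k]; first by rewrite t1_size t2_size.
rewrite t1_size => kr; case: (leqP j1 k) => [jk | kj].
  by have := pv12 (k - j1); rewrite subnKC // !path_vertex_low //; apply; lia.
have := pv12 (r - j1 + k); rewrite (_ : j1 + (r - j1 + k) = r + k); last lia.
by rewrite !path_vertex_high p12; move: t2_sum; rewrite /pivot_sum; lia.
Qed.

Lemma mirror_window_inj t1 t2 j1 j2 :
  admissible t1 -> admissible t2 -> j1 < m -> j2 < m ->
  window r (mirror_vertex t1) j1 = window r (mirror_vertex t2) j2 -> t1 = t2.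
Proof.
move=> t1_adm t2_adm j1m j2m; rewrite !mirror_window // => w12.
apply: (path_window_inj (j1 := m.-1 - j1) (j2 := m.-1 - j2)) => //; try lia.
apply: (@eq_from_nth _ 0) => [|i]; rewrite ?size_mkseq // => ir; rewrite !nth_mkseq //.
have := congr1 (nth 0 ^~ (r.-1 - i)) w12; rewrite !nth_mkseq; try lia.
rewrite (_ : r.-1 - (r.-1 - i) = i); last lia.
have [_ le1] := path_vertex_increasing t1_adm; have [_ le2] := path_vertex_increasing t2_adm.
by have := le1 (m.-1 - j1 + i); have := le2 (m.-1 - j2 + i); lia.
Qed.

Lemma vertex_map_window_inj (b1 b2 : bool) t1 t2 j1 j2 :
  admissible t1 -> admissible t2 -> j1 < m -> j2 < m ->
  (b1 -> pivot_sum t1 < n) -> (b2 -> pivot_sum t2 < n) ->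
  window r (vertex_map b1 t1) j1 = window r (vertex_map b2 t2) j2 -> b1 = b2 /\ t1 = t2.
Proof.
move=> t1_adm t2_adm j1m j2m.
case: b1; case: b2 => /= strict1 strict2 w12.
- by split; last exact: mirror_window_inj w12.
- have := no_fingerprint_mirror_window t1_adm (m.-1 - j2) j1m (strict1 isT).
  by rewrite w12 fingerprint_path_window.
- have := no_fingerprint_mirror_window t2_adm (m.-1 - j1) j2m (strict2 isT).
  by rewrite -w12 fingerprint_path_window.
- by split; last exact: path_window_inj w12.
Qed.

End Construction.

Definition set_seq N (S : {set 'I_N}) : seq nat := [seq val x | x <- enum S].

Lemma set_seq_sorted N (S : {set 'I_N}) : sorted ltn (set_seq S).
Proof.
rewrite sorted_map /enum_mem -enumT; apply: sorted_filter => [x y z|].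
  exact: ltn_trans.
by rewrite -sorted_map val_enum_ord iota_ltn_sorted.
Qed.

Lemma size_set_seq N (S : {set 'I_N}) : size (set_seq S) = #|S|.
Proof. by rewrite size_map cardE. Qed.

Lemma mem_set_seq N (S : {set 'I_N}) (x : 'I_N) : (val x \in set_seq S) = (x \in S).
Proof. by rewrite (mem_map val_inj) mem_enum. Qed.

Lemma set_seq_inj N : injective (@set_seq N).
Proof. by move=> S1 S2 S12; apply/setP => x; rewrite -!mem_set_seq S12. Qed.

Lemma count_set_seq N (S : {set 'I_N}) a :
  count (fun y => y < a) (set_seq S) = #|[set x in S | x < a]|.
Proof.
have -> : [set x in S | x < a] = S :&: [set x : 'I_N | x < a].
  by apply/setP => x; rewrite !inE.
rewrite cardE (perm_size (enum_setI _ _)) size_filter count_map.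
by apply: eq_count => x; rewrite !inE.
Qed.

Lemma sorted_count_ltn_nth (t : seq nat) a k :
  sorted ltn t -> count (fun y => y < a) t = k.+1 -> nth 0 t k < a.
Proof.
move=> t_sorted t_count; rewrite ltnNge; apply/negP => a_le.
have : count (fun y => y < a) t <= k.
  rewrite -(mkseq_nth 0 t) count_map; apply: count_iota_prefix_le => i it /= ti.
  rewrite ltnNge; apply/negP => ki.
  have : nth 0 t k <= nth 0 t i.
    move: t_sorted; rewrite ltn_sorted_uniq_leq => /andP[_ t_leq].
    by apply: (sorted_leq_nth leq_trans leqnn) => //; rewrite inE (leq_ltn_trans ki).
  lia.
lia.
Qed.

Lemma left_biased_bounds n m (S : {set 'I_n.+1}) :
  0 < m -> left_biased m S ->
  m <= #|S| /\ nth 0 (set_seq S) m.-1 + nth 0 (set_seq S) #|S|.-1 < n.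
Proof.
move=> m_gt0 /existsP[a /existsP[b /and4P[ab /eqP ab_sym /eqP X_m /forall_inP S_lt_b]]].
have S_count : count (fun y => y < a) (set_seq S) = m by rewrite count_set_seq.
have mS : m <= #|S| by rewrite -S_count -size_set_seq count_size.
split => //.
have pivot_lt : nth 0 (set_seq S) m.-1 < a.
  by apply: sorted_count_ltn_nth; rewrite ?set_seq_sorted ?prednK.
have : nth 0 (set_seq S) #|S|.-1 \in set_seq S by apply: mem_nth; rewrite size_set_seq; lia.
case/mapP => x; rewrite mem_enum => /S_lt_b x_lt_b ->.
by have := ltn_ord b; rewrite -[val x]/(nat_of_ord x); lia.
Qed.

Section Encoding.

Variables n r m : nat.
Hypotheses (m_gt0 : 0 < m) (m_le_r : m <= r).

Definition base_seq (S : {set 'I_n.+1}) : seq nat :=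
  if #|S| == r then set_seq S else rcons (set_seq S) (n - pivot m (set_seq S)).

Lemma base_seq_strict S :
  left_biased m S -> #|S| = r -> pivot_sum r m (base_seq S) < n.
Proof.
by move=> S_lb S_r; rewrite /base_seq S_r eqxx -S_r; case: (left_biased_bounds m_gt0 S_lb).
Qed.

Lemma base_seq_pivot_sum S :
  left_biased m S -> #|S| = r.-1 -> pivot_sum r m (base_seq S) = n.
Proof.
move=> S_lb S_r1; have [mS S_sum] := left_biased_bounds m_gt0 S_lb.
rewrite /base_seq S_r1 ifF; last lia.
rewrite /pivot_sum /pivot !nth_rcons size_set_seq S_r1 ifT; last lia.
rewrite ltnn eqxx; lia.
Qed.

Lemma base_seq_admissible S :
  left_biased m S -> (#|S| == r) || (#|S| == r.-1) -> admissible n r m (base_seq S).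
Proof.
move=> S_lb S_size; have [mS S_sum] := left_biased_bounds m_gt0 S_lb.
case: (eqVneq #|S| r) => [S_r | S_nr].
  have := base_seq_strict S_lb S_r; rewrite /admissible /base_seq S_r eqxx => /ltnW ->.
  by rewrite set_seq_sorted size_set_seq S_r eqxx.
have S_r1 : #|S| = r.-1 by move: S_size; rewrite (negbTE S_nr) => /eqP.
rewrite /admissible base_seq_pivot_sum // leqnn andbT /base_seq (negbTE S_nr).
rewrite size_rcons size_set_seq S_r1 prednK ?eqxx ?andbT; last lia.
move: (set_seq_sorted S) S_sum; rewrite -size_set_seq nth_last /pivot.
by case: (set_seq S) => [|y t] //= t_sorted; rewrite rcons_path t_sorted /=; lia.
Qed.

Lemma base_seq_inj S1 S2 :
  left_biased m S1 -> (#|S1| == r) || (#|S1| == r.-1) ->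
  left_biased m S2 -> (#|S2| == r) || (#|S2| == r.-1) ->
  base_seq S1 = base_seq S2 -> S1 = S2.
Proof.
move=> S1_lb /orP[] /eqP S1_size S2_lb /orP[] /eqP S2_size t12.
- by apply: set_seq_inj; move: t12; rewrite /base_seq S1_size S2_size eqxx.
- by have := base_seq_strict S1_lb S1_size; rewrite t12 base_seq_pivot_sum // ltnn.
- by have := base_seq_strict S2_lb S2_size; rewrite -t12 base_seq_pivot_sum // ltnn.
have r1_neq : (r.-1 == r) = false by apply/eqP; lia.
by apply: set_seq_inj; move: t12; rewrite /base_seq S1_size S2_size r1_neq => /rcons_inj [].
Qed.

Definition copy_index : {set {set 'I_n.+1} * bool} :=
  [set p | left_biased m p.1 && ((#|p.1| == r) || ~~ p.2 && (#|p.1| == r.-1))].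

Lemma mem_copy_index S b : (S, b) \in copy_index ->
  [/\ left_biased m S, (#|S| == r) || (#|S| == r.-1) & b -> #|S| = r].
Proof.
rewrite inE /= => /andP[S_lb]; case: b => /=; rewrite ?orbF.
  by move=> /eqP S_r; split; rewrite ?S_r ?eqxx.
by move=> S_size; split.
Qed.

Lemma card_copy_index : #|copy_index| = 2 * h n.+1 r m + h n.+1 r.-1 m.
Proof.
pose biased k := [set S : {set 'I_n.+1} | (#|S| == k) && left_biased m S].
have -> : copy_index = setX (biased r) [set: bool] :|: setX (biased r.-1) [set false].
  apply/setP => -[S b]; rewrite !inE /=.
  by case: b; case: (left_biased m S); rewrite /= ?andbT ?andbF ?orbF.
rewrite cardsU; have -> : setX (biased r) [set: bool] :&: setX (biased r.-1) [set false] = set0.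
  apply/setP => -[S b]; rewrite !inE /=.
  by case: eqP => //= ->; case: eqP => //; lia.
by rewrite cards0 subn0 !cardsX cardsT card_bool cards1 muln1 mulnC.
Qed.

Lemma tight_path_nu_ge :
  2 * h n.+1 r m + h n.+1 r.-1 m <= nu n.+1 (tight_path r (r + m - 1)).
Proof.
rewrite -card_copy_index.
apply: (card_le_nu (g := fun p => path_copy n r (r + m - 1) (vertex_map n r m p.2 (base_seq p.1)))).
- move=> [S b] /mem_copy_index[S_lb S_size _].
  by apply/path_copy_is_copy/vertex_map_increasing => //; apply: base_seq_admissible.
- by move=> p _; apply: path_copy_neq0; lia.
move=> [S1 b1] [S2 b2] e /mem_copy_index[S1_lb S1_size S1_r] /mem_copy_index[S2_lb S2_size S2_r].
have adm1 := base_seq_admissible S1_lb S1_size; have adm2 := base_seq_admissible S2_lb S2_size.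
move=> /= e1 e2; have [j1 [j2 [j1s j2s w12]]] := path_copy_meet
  (vertex_map_increasing m_gt0 m_le_r adm1 b1) (vertex_map_increasing m_gt0 m_le_r adm2 b2) e1 e2.
have j1m : j1 < m by lia.
have j2m : j2 < m by lia.
have strict1 : b1 -> pivot_sum r m (base_seq S1) < n.
  by move/S1_r; apply: base_seq_strict.
have strict2 : b2 -> pivot_sum r m (base_seq S2) < n.
  by move/S2_r; apply: base_seq_strict.
have [-> t12] := vertex_map_window_inj m_gt0 m_le_r adm1 adm2 j1m j2m strict1 strict2 w12.
by rewrite (base_seq_inj S1_lb S1_size S2_lb S2_size t12).
Qed.

End Encoding.

Lemma h0 t m : 0 < m -> h 0 t m = 0.
Proof.
move=> m_gt0; apply/eqP; rewrite cards_eq0; apply/eqP/setP => S; rewrite !inE.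
apply/negbTE/negP => /andP[_ /existsP[a /existsP[b /and4P[_ _ /eqP X_m _]]]].
by have := max_card [set x in S | x < a]; rewrite card_ord; lia.
Qed.

Theorem theorem2p2 (n r s : nat) :
  ~~ odd n -> r <= s -> s < 2 * r ->
  2 * h n r (s - r + 1) + h n r.-1 (s - r + 1) <= nu n (tight_path r s).
Proof.
move=> _ rs s_lt; set m := s - r + 1.
case: n => [|n]; first by rewrite !h0 /m //; lia.
have -> : s = r + m - 1 by rewrite /m; lia.
by apply: tight_path_nu_ge; rewrite /m; lia.
Qed.
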